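(* Let $H\in\mathbb{R}^{n_z\times n_z}$ be symmetric positive definite, $F\in\mathbb{R}^{n_x\times n_z}$, $G\in\mathbb{R}^{n_c\times n_z}$, $S\in\mathbb{R}^{n_c\times n_x}$, $w\in\mathbb{R}^{n_c}$, and assume $\{z: Gz\le Sx+w\}\neq\emptyset$ for every $x\in\mathbb{R}^{n_x}$. Assume LICQ: for every $x\in\mathbb{R}^{n_x}$, the rows $\{G_j: j\in\mathbb{A}(x)\}$ are linearly independent. Let $\kappa$ be a global Lipschitz constant, let $\hat{x}^1,\dots,\hat{x}^q\in\mathbb{R}^{n_x}$ and $x\in\mathbb{R}^{n_x}$. Define index sets recursively by $\mathbb{I}_0=\{1,\dots,n_c\}$ and, for $k=1,\dots,q$, $$\mathbb{T}_k=\big\{j\in\mathbb{A}^c(\hat{x}^k)\cap\mathbb{I}_{k-1} : \mathcal{B}(z^*(\hat{x}^k),\kappa\|x-\hat{x}^k\|)\not\subseteq\mathcal{Z}_j(x)\big\},\qquad \mathbb{I}_k=\big(\mathbb{A}(\hat{x}^k)\cap\mathbb{I}_{k-1}\big)\cup\mathbb{T}_k,$$ and set $\mathbb{I}(x)=\mathbb{I}_q$. Then $z^*(x,\mathbb{I}(x))=z^*(x)$.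
   Context: For a parameter $x$, mp-QP$(x)$ is: minimize $V(z)=\frac12 z^THz+x^TFz$ over $z\in\mathcal{Z}(x)=\{z\in\mathbb{R}^{n_z}: Gz\le Sx+w\}$. $G_j,S_j$ are the $j$-th rows of $G,S$, $w_j$ the $j$-th entry of $w$, $\mathcal{Z}_j(x)=\{z: G_jz\le S_jx+w_j\}$. For $\mathbb{I}\subseteq\{1,\dots,n_c\}$, $\mathcal{Z}(x,\mathbb{I})=\bigcap_{j\in\mathbb{I}}\mathcal{Z}_j(x)$ ($=\mathbb{R}^{n_z}$ if $\mathbb{I}=\emptyset$) and $z^*(x,\mathbb{I})$ is the unique minimizer of $V$ over $\mathcal{Z}(x,\mathbb{I})$; $z^*(x)=z^*(x,\{1,\dots,n_c\})$. Active set $\mathbb{A}(x)=\{j: G_jz^*(x)=S_jx+w_j\}$, inactive set $\mathbb{A}^c(x)=\{j: G_jz^*(x)<S_jx+w_j\}$. A global Lipschitz constant is $\kappa\in\mathbb{R}$ with $\|z^*(x_1,\mathbb{I})-z^*(x_2,\mathbb{I})\|\le\kappa\|x_1-x_2\|$ for all $x_1,x_2$ and all $\mathbb{I}\subseteq\{1,\dots,n_c\}$. $\mathcal{B}(q,r)$ is the closed Euclidean ball. For $G_j\ne0$, the condition $\mathcal{B}(z^*(\hat x^k),\kappa\|x-\hat x^k\|)\not\subseteq\mathcal{Z}_j(x)$ is equivalent to $\kappa\|x-\hat{x}^k\|>\frac{w_j+S_jx-G_jz^*(\hat{x}^k)}{\|G_j\|}$, which is how the paper's Algorithm 2 writes it.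 *)

From HB Require Import structures.
From mathcomp Require Import all_boot all_order all_algebra.
From mathcomp Require Import reals.
From Stdlib Require Import ClassicalEpsilon.
Set Implicit Arguments. Unset Strict Implicit. Unset Printing Implicit Defensive.
Import Order.TTheory GRing.Theory Num.Theory.
Local Open Scope ring_scope.

Section MPQP.
Variables (R : realType) (nz nx nc : nat).
Variables (H : 'M[R]_nz) (F : 'M[R]_(nx, nz)) (G : 'M[R]_(nc, nz))
          (S : 'M[R]_(nc, nx)) (w : 'cV[R]_nc).

Definition vnorm (m : nat) (v : 'cV[R]_m) : R := Num.sqrt (\sum_i (v i 0) ^+ 2).

Definition Vobj (x : 'cV[R]_nx) (z : 'cV[R]_nz) : R :=
  2^-1 * (z^T *m H *m z) 0 0 + (x^T *m F *m z) 0 0.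

Definition inZj (x : 'cV[R]_nx) (j : 'I_nc) (z : 'cV[R]_nz) : Prop :=
  (G *m z) j 0 <= (S *m x + w) j 0.

Definition inZI (x : 'cV[R]_nx) (I : {set 'I_nc}) (z : 'cV[R]_nz) : Prop :=
  forall j, j \in I -> inZj x j z.

Definition is_minimizer (x : 'cV[R]_nx) (I : {set 'I_nc}) (z : 'cV[R]_nz) : Prop :=
  inZI x I z /\ forall z', inZI x I z' -> Vobj x z <= Vobj x z'.

Definition zstarI (x : 'cV[R]_nx) (I : {set 'I_nc}) : 'cV[R]_nz :=
  epsilon (inhabits 0) (is_minimizer x I).

Definition zstar (x : 'cV[R]_nx) : 'cV[R]_nz := zstarI x [set: 'I_nc].

Definition Aset (x : 'cV[R]_nx) : {set 'I_nc} :=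
  [set j | (G *m zstar x) j 0 == (S *m x + w) j 0].
Definition Acset (x : 'cV[R]_nx) : {set 'I_nc} :=
  [set j | (G *m zstar x) j 0 < (S *m x + w) j 0].

Definition propb (P : Prop) : bool :=
  if excluded_middle_informative P then true else false.

Definition ball_not_sub (q : 'cV[R]_nz) (r : R) (x : 'cV[R]_nx) (j : 'I_nc) : Prop :=
  ~ (forall z : 'cV[R]_nz, vnorm (z - q) <= r -> inZj x j z).

Definition Tset (kappa : R) (x xh : 'cV[R]_nx) (Iprev : {set 'I_nc}) : {set 'I_nc} :=
  [set j | (j \in Acset xh) && (j \in Iprev) &&
           propb (ball_not_sub (zstar xh) (kappa * vnorm (x - xh)) x j)].

Definition Istep (kappa : R) (x : 'cV[R]_nx) (Iprev : {set 'I_nc}) (xh : 'cV[R]_nx)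
  : {set 'I_nc} :=
  (Aset xh :&: Iprev) :|: Tset kappa x xh Iprev.

Definition Ix (kappa : R) (q : nat) (xhat : 'I_q -> 'cV[R]_nx) (x : 'cV[R]_nx)
  : {set 'I_nc} :=
  foldl (Istep kappa x) [set: 'I_nc] [seq xhat k | k <- enum 'I_q].

Definition sym_pos_def : Prop :=
  H^T = H /\ forall z : 'cV[R]_nz, z != 0 -> 0 < (z^T *m H *m z) 0 0.

Definition feasible_all : Prop :=
  forall x : 'cV[R]_nx, exists z : 'cV[R]_nz, inZI x [set: 'I_nc] z.

Definition LICQ : Prop :=
  forall x : 'cV[R]_nx, forall c : 'I_nc -> R,
    \sum_(j in Aset x) c j *: row j G = 0 -> forall j, j \in Aset x -> c j = 0.

Definition global_lipschitz (kappa : R) : Prop :=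
  forall (x1 x2 : 'cV[R]_nx) (I : {set 'I_nc}),
    vnorm (zstarI x1 I - zstarI x2 I) <= kappa * vnorm (x1 - x2).

End MPQP.

From mathcomp Require Import all_boot all_order all_algebra.
From mathcomp Require Import reals lra.
From mathcomp Require boolp classical_sets topology normedtype derive.
From Stdlib Require Import ClassicalEpsilon.
Import Order.TTheory GRing.Theory Num.Theory.
Set Implicit Arguments. Unset Strict Implicit. Unset Printing Implicit Defensive.
Local Open Scope ring_scope.

(* A constraint j leaves the index set at step k only if it is inactive at
   z*(x^k) and the ball of radius kappa |x - x^k| around z*(x^k) lies in
   Z_j(x).  Dropping an inactive constraint does not move z*(x^k), so by the
   Lipschitz bound z*(x, all \ {j}) lies in that ball, hence is feasible for
   the full problem, and z*(x) still minimizes V once j alone is removed.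
   Inactive constraints of z*(x) can be removed freely.  For the removed
   active ones, LICQ gives directions u_i with G_l u_i = delta_li on the
   active set, and minimality of z*(x) with and without constraint i forces
   grad V(z*(x)) . u_i = 0.  Subtracting these components turns z - z*(x),
   for any z in Z(x, I(x)), into a feasible direction of Z(x) at z*(x), so
   grad V(z*(x)) . (z - z*(x)) >= 0 and z*(x) minimizes V over Z(x, I(x)).
   Minimizers exist because a positive definite quadratic is coercive, so
   its sublevel sets over a polyhedron are compact. *)

Section CoerciveMinimum.
Import boolp classical_sets topology normedtype derive numFieldNormedType.Exports.
Local Open Scope classical_set_scope.
Variables (R : realType) (n : nat).
Implicit Types (v : 'rV[R]_n) (C : set 'rV[R]_n) (f : 'rV[R]_n -> R).

Lemma continuous_mulmx_coord k (M : 'M[R]_(n, k)) j :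
  continuous (fun v : 'rV[R]_n => (v *m M) 0 j).
Proof.
under eq_fun do rewrite mxE.
apply: continuous_big => [|i _ v]; first exact: add_continuous.
by apply: continuousM; [exact: coord_continuous | exact: cst_continuous].
Qed.

Lemma closed_sublevel (T : topologicalType) (g : T -> R) r :
  continuous g -> closed [set t | g t <= r].
Proof.
by move=> gc; exact: (preimage_closed (fun t _ => gc t) (@closed_le _ r)).
Qed.

Lemma bounded_set_norm_le C r : (forall v, C v -> `|v| <= r) -> bounded_set C.
Proof.
move=> Cr; exists r; split; first by rewrite num_real.
by move=> M rM v Cv; apply: le_trans (Cr v Cv) (ltW rM).
Qed.

Lemma coord_le_norm v i : `|v 0 i| <= `|v|.
Proof.
by rewrite [leRHS]/Num.norm /= mx_normrE; apply/bigmax_geP; right; exists (0, i).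
Qed.

Lemma continuous_min_bounded_sublevel f C p : continuous f -> closed C -> C p ->
    bounded_set (C `&` [set v | f v <= f p]) ->
  exists2 c, C c & forall v, C v -> f c <= f v.
Proof.
move=> fc Ccl Cp Ab.
set A := C `&` _ in Ab.
have Ane : A !=set0 by exists p; split => /=.
have Acp : compact A.
  apply: bounded_closed_compact => //.
  by apply: closedI => //; exact: closed_sublevel.
have [c /set_mem [Cc fcp] cmin] := EVT_min_rV Ane Acp (continuous_subspaceT fc).
exists c => // v Cv; have [fvp|/ltW fpv] := leP (f v) (f p).
  by apply: cmin; apply/mem_set.
exact: le_trans fcp fpv.
Qed.

Definition qform (Q : 'M[R]_n) v : R := (v *m Q *m v^T) 0 0.

Lemma qform0 Q : qform Q 0 = 0.
Proof. by rewrite /qform !mul0mx mxE. Qed.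

Lemma qformZ Q a v : qform Q (a *: v) = a ^+ 2 * qform Q v.
Proof. by rewrite /qform linearZ /= -!scalemxAl -scalemxAr !mxE mulrA -expr2. Qed.

Lemma continuous_qform Q : continuous (qform Q).
Proof.
have -> : qform Q = fun v => \sum_k (v *m Q) 0 k * v 0 k.
  apply: funext => v; rewrite /qform mxE.
  by apply: eq_bigr => k _; rewrite [v^T _ _]mxE.
apply: continuous_big => [|k _ v]; first exact: add_continuous.
by apply: continuousM; [exact: continuous_mulmx_coord | exact: coord_continuous].
Qed.

Lemma qform_coercive (Q : 'M[R]_n) : (forall v, v != 0 -> 0 < qform Q v) ->
  exists2 m, 0 < m & forall v, m * `|v| ^+ 2 <= qform Q v.
Proof.
move=> Qpos.
have [[v0 v0nz]|] := pselect (exists v0 : 'rV[R]_n, v0 != 0); last first.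
  move=> zero; exists 1 => // v; have -> : v = 0.
    by apply: contrapT => /eqP vnz; apply: zero; exists v.
  by rewrite qform0 normr0 expr0n /= mulr0.
pose Sph : set 'rV[R]_n := [set v | `|v| = 1].
have unitP v : v != 0 -> Sph (`|v|^-1 *: v).
  by move=> vnz; rewrite /Sph /= normrZ normfV normr_id mulVf ?normr_eq0.
have Scp : compact Sph.
  apply: bounded_closed_compact; first by apply: (@bounded_set_norm_le _ 1) => v ->.
  exact: (preimage_closed (fun v _ => @norm_continuous _ _ v) (@closed_eq _ 1)).
have [c /set_mem Sc cmin] := EVT_min_rV (ex_intro _ _ (unitP _ v0nz)) Scp
  (continuous_subspaceT (@continuous_qform Q)).
have cnz : c != 0 by rewrite -normr_eq0 Sc oner_eq0.
exists (qform Q c); first exact: Qpos.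
move=> v; have [->|vnz] := eqVneq v 0.
  by rewrite qform0 normr0 expr0n /= mulr0.
have := cmin _ (mem_set (unitP v vnz)); rewrite qformZ exprVn.
by rewrite ler_pdivlMl ?exprn_gt0 ?normr_gt0 // mulrC.
Qed.

Lemma mulmx_coord_norm_le (a : 'cV[R]_n) v :
  `|(v *m a) 0 0| <= (\sum_i `|a i 0|) * `|v|.
Proof.
rewrite mxE big_distrl /=; apply: le_trans (ler_norm_sum _ _ _) _.
by apply: ler_sum => i _; rewrite normrM mulrC ler_wpM2l // coord_le_norm.
Qed.

Lemma quadratic_min_exists (Q : 'M[R]_n) (a : 'cV[R]_n) C p :
    (forall v, v != 0 -> 0 < qform Q v) -> closed C -> C p ->
  exists2 c, C c &
    forall v, C v -> qform Q c / 2 + (c *m a) 0 0 <= qform Q v / 2 + (v *m a) 0 0.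
Proof.
move=> Qpos Ccl Cp; pose f v := qform Q v / 2 + (v *m a) 0 0.
apply: (@continuous_min_bounded_sublevel f _ p) => //.
  move=> v; apply: (@continuousD _ _ _ (fun v => qform Q v / 2)).
    by apply: continuousM; [exact: continuous_qform | exact: cst_continuous].
  exact: continuous_mulmx_coord.
have [m m0 mQ] := qform_coercive Qpos; pose K := \sum_i `|a i 0|.
apply: (@bounded_set_norm_le _ (1 + 2 * (K + `|f p|) / m)) => v [_ /= fvp].
have fpK : f p <= `|f p| := ler_norm _.
have lin : - (K * `|v|) <= (v *m a) 0 0.
  by have := mulmx_coord_norm_le a v; rewrite ler_norml => /andP [].
have quad := mQ v; rewrite /f in fvp fpK.
rewrite -lerBlDl ler_pdivlMr //.
have K0 : 0 <= K by apply: sumr_ge0.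
have fp0 : 0 <= `|f p| := normr_ge0 _.
move: (qform Q v) ((v *m a) 0 0) `|v| (normr_ge0 v) `|f p| fvp fpK lin quad fp0.
move=> qv lv r r0 fp *.
have [r1|r1] := leP r 1; first nra.
have : m * r <= 2 * (K + fp) by rewrite -(ler_pM2r (lt_trans ltr01 r1)); nra.
nra.
Qed.

Lemma closed_polyhedron k (M : 'M[R]_(n, k)) (c : 'I_k -> R) (P : pred 'I_k) :
  closed (fun v => forall j, P j -> (v *m M) 0 j <= c j).
Proof.
by apply: closed_bigI => j _; apply: closed_sublevel; exact: continuous_mulmx_coord.
Qed.

End CoerciveMinimum.

Lemma mulmx_shift_coord (K : comPzRingType) k m (A : 'M[K]_(k, m))
    (u v : 'cV_m) t i :
  (A *m (u + t *: v)) i 0 = (A *m u) i 0 + t * (A *m v) i 0.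
Proof.
by rewrite mulmxDr -scalemxAr; move: (A *m u) (A *m v) => u' v'; rewrite !mxE.
Qed.

Lemma mulmx_sub_coord (K : comPzRingType) k m (A : 'M[K]_(k, m)) (u v : 'cV_m) i :
  (A *m (u - v)) i 0 = (A *m u) i 0 - (A *m v) i 0.
Proof. by rewrite mulmxBr; move: (A *m u) (A *m v) => u' v'; rewrite !mxE. Qed.

Lemma mulmx_opp_coord (K : comPzRingType) k m (A : 'M[K]_(k, m)) (v : 'cV_m) i :
  (A *m - v) i 0 = - (A *m v) i 0.
Proof. by rewrite mulmxN; move: (A *m v) => v'; rewrite mxE. Qed.

Lemma mulmx_comb_coord (K : comPzRingType) k m (A : 'M[K]_(k, m)) (J : finType)
    (P : pred J) (c : J -> K) (v : J -> 'cV_m) i :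
  (A *m \sum_(j | P j) c j *: v j) i 0 = \sum_(j | P j) c j * (A *m v j) i 0.
Proof.
rewrite mulmx_sumr summxE; apply: eq_bigr => j _.
by rewrite -scalemxAr; move: (A *m v j) => v'; rewrite mxE.
Qed.

Lemma dual_basis (K : fieldType) k m (M : 'M[K]_(k, m)) (A : {set 'I_k}) :
    (forall c : 'I_k -> K,
       \sum_(j in A) c j *: row j M = 0 -> forall j, j \in A -> c j = 0) ->
  exists u : 'I_k -> 'cV[K]_m,
    forall i l, i \in A -> l \in A -> (M *m u i) l 0 = (l == i)%:R.
Proof.
move=> indep; have [A0|[i0 i0A]] := set_0Vmem A.
  by exists (fun=> 0) => i l; rewrite A0 inE.
pose MA : 'M[K]_(#|A|, m) := \matrix_(r, c) M (enum_val r) c.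
have rowMA r : row r MA = row (enum_val r) M by apply/rowP => c; rewrite !mxE.
have /row_freeP [B MAB] : row_free MA.
  apply/inj_row_free => v vMA; apply/rowP => r; rewrite [RHS]mxE.
  have := indep (fun j => v 0 (enum_rank_in i0A j)) _ _ (enum_valP r).
  rewrite enum_valK_in; apply; rewrite big_enum_val /= -[RHS]vMA mulmx_sum_row.
  by apply: eq_bigr => r' _; rewrite enum_valK_in rowMA.
exists (fun i => col (enum_rank_in i0A i) B) => i l iA lA.
have -> : (M *m col (enum_rank_in i0A i) B) l 0 =
          (MA *m B) (enum_rank_in i0A l) (enum_rank_in i0A i).
  by rewrite !mxE; apply: eq_bigr => c _; rewrite !mxE enum_rankK_in.
rewrite MAB mxE; congr ((nat_of_bool _)%:R).
by apply/eqP/eqP => [/(enum_rank_in_inj lA iA)|->].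
Qed.

Lemma propbP (P : Prop) : reflect P (propb P).
Proof. by rewrite /propb; case: excluded_middle_informative => h; constructor. Qed.

Section QuadraticProgram.
Variables (R : realType) (nz nx nc : nat).
Variables (H : 'M[R]_nz) (F : 'M[R]_(nx, nz)) (G : 'M[R]_(nc, nz))
          (S : 'M[R]_(nc, nx)) (w : 'cV[R]_nc).
Hypothesis H_spd : sym_pos_def H.

Local Notation V := (Vobj H F).
Local Notation inZ := (inZI G S w).
Local Notation is_min := (is_minimizer H F G S w).
Local Notation b x := (S *m x + w).
Implicit Types (x : 'cV[R]_nx) (z d : 'cV[R]_nz) (I J : {set 'I_nc}).

Definition dV x z d : R := ((z^T *m H + x^T *m F) *m d) 0 0.

Lemma qform_tr_ge0 d : 0 <= qform H d^T.
Proof.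
have [->|dnz] := eqVneq d 0; first by rewrite trmx0 qform0.
by rewrite /qform trmxK ltW //; case: H_spd => _; apply.
Qed.

Lemma qform_tr_eq0 d : qform H d^T = 0 -> d = 0.
Proof.
apply: contra_eq => dnz; rewrite /qform trmxK gt_eqF //.
by case: H_spd => _; apply.
Qed.

Lemma Vobj_shift x z d t :
  V x (z + t *: d) = V x z + t * dV x z d + t ^+ 2 * qform H d^T / 2.
Proof.
have Hsym : (d^T *m H *m z) 0 0 = (z^T *m H *m d) 0 0.
  have -> : (d^T *m H *m z) 0 0 = ((d^T *m H *m z)^T) 0 0 by rewrite [RHS]mxE.
  by rewrite !trmx_mul trmxK H_spd.1 mulmxA.
rewrite /Vobj /dV /qform trmxK [(z + _)^T]linearD /= [(t *: d)^T]linearZ /=.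
rewrite !(mulmxDl, mulmxDr) -!(scalemxAl, scalemxAr).
move: Hsym; move: (z^T *m H *m z) (d^T *m H *m z) (z^T *m H *m d).
move: (d^T *m H *m d) (x^T *m F *m z) (x^T *m F *m d) => Hdd Fz Fd Hzz Hdz Hzd.
rewrite !mxE => ->; lra.
Qed.

Lemma inZI_segment x I z1 z2 t : 0 <= t -> t <= 1 ->
  inZ x I z1 -> inZ x I z2 -> inZ x I (z1 + t *: (z2 - z1)).
Proof.
move=> t0 t1 h1 h2 j jI; have := h1 j jI; have := h2 j jI.
rewrite /inZj mulmx_shift_coord mulmx_sub_coord.
move: ((G *m z1) j 0) ((G *m z2) j 0) ((b x) j 0) => g1 g2 bj; nra.
Qed.

Lemma minimizer_unique x I z1 z2 : is_min x I z1 -> is_min x I z2 -> z1 = z2.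
Proof.
move=> [f1 m1] [f2 m2]; pose d := z2 - z1.
have z2E : z2 = z1 + 1 *: d by rewrite scale1r addrC subrK.
suff /qform_tr_eq0 d0 : qform H d^T = 0 by rewrite z2E d0 scaler0 addr0.
have half_ge0 : 0 <= 2^-1 :> R by lra.
have half_le1 : 2^-1 <= 1 :> R by lra.
have := m1 _ (inZI_segment half_ge0 half_le1 f1 f2); rewrite -/d Vobj_shift.
have := m1 _ f2; have := m2 _ f1; rewrite z2E !Vobj_shift.
have := qform_tr_ge0 d.
move: (dV x z1 d) (qform H d^T) (V x z1) => g q v0; lra.
Qed.

Lemma zstarI_spec x I :
  (exists z, is_min x I z) -> is_min x I (zstarI H F G S w x I).
Proof. exact: epsilon_spec. Qed.

Lemma zstarI_eq x I z : is_min x I z -> zstarI H F G S w x I = z.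
Proof.
by move=> zmin; apply: minimizer_unique (zstarI_spec (ex_intro _ z zmin)) zmin.
Qed.

Lemma minimizer_of_dV_ge0 x J z : inZ x J z ->
  (forall z', inZ x J z' -> 0 <= dV x z (z' - z)) -> is_min x J z.
Proof.
move=> zJ dV_ge0; split=> // z' z'J.
have -> : z' = z + 1 *: (z' - z) by rewrite scale1r addrC subrK.
rewrite Vobj_shift; have := dV_ge0 _ z'J; have := qform_tr_ge0 (z' - z); lra.
Qed.

Definition feasible_dir x J z d :=
  forall l, l \in J -> (G *m z) l 0 < (b x) l 0 \/ (G *m d) l 0 <= 0.

Definition active_set x z : {set 'I_nc} := [set l | (G *m z) l 0 == (b x) l 0].

Lemma inactive_slack x J z l : inZ x J z -> l \in J -> l \notin active_set x z ->
  (G *m z) l 0 < (b x) l 0.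
Proof. by move=> zJ lJ; rewrite inE lt_neqAle => ->; apply: zJ. Qed.

Lemma feasible_dir_active x J z d : inZ x J z ->
    (forall l, l \in J -> l \in active_set x z -> (G *m d) l 0 <= 0) ->
  feasible_dir x J z d.
Proof.
move=> zJ dA l lJ; have [lA|lA] := boolP (l \in active_set x z).
  by right; apply: dA.
by left; apply: inactive_slack zJ lJ lA.
Qed.

Lemma feasible_dir_segment x J z d : inZ x J z -> feasible_dir x J z d ->
  exists2 t0, 0 < t0 & forall t, 0 < t -> t <= t0 -> inZ x J (z + t *: d).
Proof.
move=> zJ dJ; pose s l := (b x) l 0 - (G *m z) l 0.
pose T := \sum_(l | 0 < s l) `|(G *m d) l 0| / s l.
have T0 : 0 <= T by apply: sumr_ge0 => l sl; rewrite divr_ge0 // ltW.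
exists (1 + T)^-1 => [|t t0 tT l lJ]; first by rewrite invr_gt0; lra.
have tT1 : t * (1 + T) <= 1 by rewrite -ler_pdivlMr ?mul1r //; lra.
rewrite /inZj mulmx_shift_coord.
have := zJ l lJ; rewrite /inZj.
case: (dJ l lJ) => [slack|Gd0]; last by nra.
have sl : 0 < s l by rewrite subr_gt0.
have fT : `|(G *m d) l 0| / s l <= T.
  rewrite [T](bigD1 l) //= lerDl; apply: sumr_ge0 => k /andP [sk _].
  by rewrite divr_ge0 // ltW.
have := ler_norm ((G *m d) l 0); have := normr_ge0 ((G *m d) l 0).
rewrite ler_pdivrMr // in fT; rewrite /s in sl fT *.
move: ((G *m d) l 0) `|_| ((G *m z) l 0) ((b x) l 0) fT sl => a na gz bl *; nra.
Qed.

Lemma ge0_of_small_steps (g q t0 : R) : 0 < t0 ->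
  (forall t, 0 < t -> t <= t0 -> 0 <= g + t * q) -> 0 <= g.
Proof.
move=> t0_gt0 small; rewrite leNgt; apply/negP => g_lt0.
pose t := Num.min t0 (- g / (`|q| + 1)).
have q1 : 0 < `|q| + 1 by rewrite ltr_wpDl.
have t_gt0 : 0 < t by rewrite lt_min t0_gt0 divr_gt0 // oppr_gt0.
have tq : t * (`|q| + 1) <= - g by rewrite -ler_pdivlMr // ge_min lexx orbT.
have tt0 : t <= t0 by rewrite ge_min lexx.
have := small t t_gt0 tt0; have := ler_norm q; nra.
Qed.

Lemma minimizer_dV_ge0 x J z d :
  is_min x J z -> feasible_dir x J z d -> 0 <= dV x z d.
Proof.
move=> [zJ zmin] dJ; have [t0 t0_gt0 seg] := feasible_dir_segment zJ dJ.
apply: (@ge0_of_small_steps _ (qform H d^T / 2) t0) => // t t_gt0 tt0.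
have := zmin _ (seg t t_gt0 tt0); rewrite Vobj_shift => h.
have : 0 <= t * (dV x z d + t * (qform H d^T / 2)) by nra.
by rewrite pmulr_rge0.
Qed.

Lemma minimizer_setD1 x I z j : is_min x I z -> (G *m z) j 0 < (b x) j 0 ->
  is_min x (I :\ j) z.
Proof.
move=> zmin zj.
have zID : inZ x (I :\ j) z by move=> l /setD1P [_]; apply: zmin.1.
apply: minimizer_of_dV_ge0 => // z' z'J.
apply: minimizer_dV_ge0 zmin (feasible_dir_active zmin.1 _) => l lI lA.
have lj : l != j by apply: contraTneq lA => ->; rewrite inE (lt_eqF zj).
move: lA; rewrite inE mulmx_sub_coord subr_le0 => /eqP ->.
by apply: z'J; rewrite in_setD1 lj.
Qed.

Lemma minimizer_exists x I : (exists z, inZ x I z) -> exists z, is_min x I z.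
Proof.
move=> [z0 z0I].
have Hpos v : v != 0 -> 0 < qform H v.
  by move=> vnz; have := H_spd.2 v^T; rewrite trmxK trmx_eq0; apply.
have Gtr z j : (z^T *m G^T) 0 j = (G *m z) j 0 by rewrite -trmx_mul mxE.
have Vtr z : V x z = qform H z^T / 2 + (z^T *m (x^T *m F)^T) 0 0.
  by rewrite /Vobj /qform trmxK mulrC -trmx_mul [_^T 0 0]mxE.
have Cz0 : forall j, j \in I -> (z0^T *m G^T) 0 j <= (b x) j 0.
  by move=> j jI; rewrite Gtr; apply: z0I.
have [c Cc cmin] := quadratic_min_exists (x^T *m F)^T Hpos
  (@closed_polyhedron _ _ _ G^T _ (mem I)) Cz0.
exists c^T; split=> [j jI|z zI]; first by rewrite /inZj -Gtr trmxK; apply: Cc.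
by rewrite !Vtr trmxK; apply: cmin => j jI; rewrite Gtr; apply: zI.
Qed.

Section ActiveDualBasis.
Variables (x : 'cV[R]_nx) (z : 'cV[R]_nz) (u : 'I_nc -> 'cV[R]_nz).
Hypothesis zmin : is_min x [set: 'I_nc] z.
Hypothesis u_dual : forall i l, i \in active_set x z -> l \in active_set x z ->
  (G *m u i) l 0 = (l == i)%:R.

Lemma dV_dual_eq0 i : i \in active_set x z -> is_min x ([set: 'I_nc] :\ i) z ->
  dV x z (u i) = 0.
Proof.
move=> iA zmin_i; apply/le_anti/andP; split.
  rewrite -oppr_ge0 -mulmx_opp_coord -/(dV x z (- u i)).
  apply: minimizer_dV_ge0 zmin (feasible_dir_active zmin.1 _) => l _ lA.
  by rewrite mulmx_opp_coord u_dual // oppr_le0.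
apply: minimizer_dV_ge0 zmin_i (feasible_dir_active zmin_i.1 _).
move=> l /setD1P [li _] lA.
by rewrite u_dual // (negbTE li).
Qed.

Lemma minimizer_relax_active I :
  (forall i, i \in active_set x z -> i \notin I -> is_min x ([set: 'I_nc] :\ i) z) ->
  is_min x I z.
Proof.
move=> drop; apply: minimizer_of_dV_ge0 => [l _|z1 z1I]; first exact: zmin.1.
pose A := active_set x z; pose d := z1 - z.
pose D := [set i in A | i \notin I]; pose dd := \sum_(i in D) (G *m d) i 0 *: u i.
have Gdd l : l \in A -> (G *m dd) l 0 = if l \in D then (G *m d) l 0 else 0.
  move=> lA; rewrite /dd mulmx_comb_coord.
  under eq_bigr => i /setIdP [iA _] do rewrite u_dual //.
  case: ifP => [lD|/negbT lD]; last first.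
    apply: big1 => i iD; rewrite (_ : (l == i) = false) ?mulr0 //.
    by apply: contraNF lD => /eqP ->.
  rewrite (bigD1 l) //= eqxx mulr1 big1 ?addr0 // => i /andP [_ il].
  by rewrite eq_sym (negbTE il) mulr0.
have dVd : dV x z d = dV x z (d - dd).
  rewrite [RHS]/dV mulmx_sub_coord /dd mulmx_comb_coord big1 ?subr0 //.
  move=> i /setIdP [iA iI].
  by rewrite -/(dV x z (u i)) dV_dual_eq0 ?mulr0 //; apply: drop.
rewrite -/d dVd.
apply: minimizer_dV_ge0 zmin (feasible_dir_active zmin.1 _) => l _ lA.
rewrite mulmx_sub_coord Gdd //; case: ifP => [_|/negbT]; first by rewrite subrr.
rewrite inE lA negbK /= subr0 mulmx_sub_coord => lI.
by move: lA; rewrite inE => /eqP ->; rewrite subr_le0; apply: z1I.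
Qed.

End ActiveDualBasis.

Section FeasibleProgram.
Hypothesis feasible : feasible_all G S w.

Lemma zstarI_min x I : is_min x I (zstarI H F G S w x I).
Proof.
apply/zstarI_spec/minimizer_exists; have [z zT] := feasible x.
by exists z => j _; apply: zT; rewrite in_setT.
Qed.

Variable kappa : R.
Hypothesis lipschitz : global_lipschitz H F G S w kappa.
Local Notation zstar := (zstar H F G S w).

Lemma Istep_drop_min x (xh : 'cV[R]_nx) (Iprev : {set 'I_nc}) j :
  j \in Iprev -> j \notin Istep H F G S w kappa x Iprev xh ->
  is_min x ([set: 'I_nc] :\ j) (zstar x).
Proof.
rewrite /Istep in_setU in_setI negb_or => jI; rewrite jI andbT => /andP [jnA jnT].
have [zT zmin] := zstarI_min x [set: 'I_nc].
have jslack : (G *m zstar xh) j 0 < (b xh) j 0.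
  exact: inactive_slack (zstarI_min xh [set: 'I_nc]).1 (in_setT j) jnA.
have ball_in z : vnorm (z - zstar xh) <= kappa * vnorm (x - xh) -> inZj G S w x j z.
  move: jnT; rewrite inE inE jslack jI /= => /propbP /NNPP; exact.
have zstar_xh : zstarI H F G S w xh ([set: 'I_nc] :\ j) = zstar xh.
  exact/zstarI_eq/minimizer_setD1/jslack/zstarI_min.
have [z'J z'min] := zstarI_min x ([set: 'I_nc] :\ j).
set z' := zstarI _ _ _ _ _ x _ in z'J z'min.
have z'T : inZ x [set: 'I_nc] z'.
  move=> l _; have [->|lj] := eqVneq l j.
    by apply: ball_in; rewrite -zstar_xh; apply: lipschitz.
  by apply: z'J; rewrite !inE lj.
split=> [l /setD1P [_ lT]|z zJ]; first exact: zT.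
exact: le_trans (zmin _ z'T) (z'min _ zJ).
Qed.

Lemma Ix_drop_min q (xhat : 'I_q -> 'cV[R]_nx) x j :
  j \notin Ix H F G S w kappa xhat x -> is_min x ([set: 'I_nc] :\ j) (zstar x).
Proof.
rewrite /Ix; have : j \in [set: 'I_nc] by rewrite inE.
elim: [seq _ | _ <- _] {1 2}[set: 'I_nc] => [|xh s IH] I0 /=; first by move=> ->.
move=> jI0; case: (boolP (j \in Istep H F G S w kappa x I0 xh)) => [/IH|jn _].
  exact.
exact: Istep_drop_min jI0 jn.
Qed.

End FeasibleProgram.
End QuadraticProgram.

Theorem theorem2 (R : realType) (nz nx nc : nat)
  (H : 'M[R]_nz) (F : 'M[R]_(nx, nz)) (G : 'M[R]_(nc, nz))
  (S : 'M[R]_(nc, nx)) (w : 'cV[R]_nc) (kappa : R)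
  (q : nat) (xhat : 'I_q -> 'cV[R]_nx) (x : 'cV[R]_nx) :
  sym_pos_def H ->
  feasible_all G S w ->
  LICQ H F G S w ->
  global_lipschitz H F G S w kappa ->
  zstarI H F G S w x (Ix H F G S w kappa xhat x) = zstar H F G S w x.
Proof.
move=> H_spd feasible licq lipschitz.
apply: (zstarI_eq H_spd).
have [u u_dual] := dual_basis (licq x).
have zstar_min := zstarI_min F H_spd feasible x [set: 'I_nc].
apply: (minimizer_relax_active H_spd zstar_min u_dual) => i _.
exact: Ix_drop_min.
Qed.
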